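(* Let $K$ be a field of characteristic $0$ and let $S$ be a finite set of non-zero integers. Then there exists a positive integer $N$ such that $X_N^S=K^S$.
   Context: $K^S$ denotes the $K$-algebra of all functions $S\to K$ (with pointwise operations). Define $\gamma^S\colon K^*\to K^S$ by $\gamma^S(x)(s):=x^s$ for $s\in S$. For a positive integer $k$, let $X_k^S:=\{\sum_{i=1}^k\gamma^S(x_i)-\sum_{j=1}^k\gamma^S(y_j) : x_1,\dots,x_k,y_1,\dots,y_k\in K^*\}\subseteq K^S$. *)

From HB Require Import structures.
From mathcomp Require Import all_boot all_order all_algebra.
Set Implicit Arguments. Unset Strict Implicit. Unset Printing Implicit Defensive.
Import Order.TTheory GRing.Theory Num.Theory.
Local Open Scope ring_scope.

(* The finite set S of integers is represented by a sequence S : seq int;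
   an element of K^S is represented by a function f : int -> K, of which
   only the values on S matter (equality in K^S = agreement on S). *)

Definition gammaS (K : fieldType) (x : K) : int -> K := fun s => x ^ s.

Definition inXS (K : fieldType) (S : seq int) (k : nat) (f : int -> K) : Prop :=
  exists (x y : 'I_k -> K),
    (forall i, x i != 0) /\ (forall j, y j != 0) /\
    (forall s, s \in S ->
       f s = \sum_(i < k) gammaS (x i) s - \sum_(j < k) gammaS (y j) s).

From HB Require Import structures.
From mathcomp Require Import all_boot all_order all_algebra.
Set Implicit Arguments.
Unset Strict Implicit.
Unset Printing Implicit Defensive.
Import GRing.Theory.
Local Open Scope ring_scope.

(* Call [f] a signed power sum if [f s = sum_i x_i ^ s - sum_j y_j ^ s] on [S]
   with non-zero bases. These are closed under sums, negation, twisting by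
   [t ^ s] and multiplication by [a ^ s - k] for natural [k]. Multiplying [1]
   by factors vanishing exactly at [r] (with [a] = 2 or 1/2, [k] = 2 ^ |r|)
   for all [r] in [S] other than [s0] gives a non-zero multiple [c] of the
   indicator of [s0]. To get every multiple with a fixed number of terms,
   twist it by [(b t + 1) ^ sgz s0] for [b] running over a signed power sum
   whose power sums of orders [0..|s0|] vanish except at order 1: by the
   binomial theorem the result is [c k |s0| t], linear in [t], and its
   difference at [t] and [t - d] takes any value. Characteristic 0 makes [K]
   infinite, so [t] can avoid the roots of the [b t + 1]. Summing over [s0]
   in [S] and padding with [1 - 1] gives the theorem. *)

Section SignedPowerSums.

Context {K : fieldType}.
Implicit Types (P Q : seq K) (S : seq int) (f g : int -> K).

Definition spsum P Q (s : int) : K := \sum_(x <- P) x ^ s - \sum_(x <- Q) x ^ s.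

(* On [S], [f] is a signed power sum with [m] positive and [n] negative
   non-zero bases; [m] and [n] may differ until the very last step. *)
Definition is_spsum S (m n : nat) f : Prop := exists P Q,
  [/\ size P = m, size Q = n, 0 \notin P ++ Q & {in S, f =1 spsum P Q}].

Lemma is_spsum_inXS S n f : is_spsum S n n f -> inXS S n f.
Proof.
case=> P [Q [sP sQ]]; rewrite mem_cat negb_or => /andP[P0 Q0] fE.
have nth_neq0 (R : seq K) i : 0 \notin R -> (i < size R)%N -> nth 1 R i != 0.
  by move=> R0 iR; apply: contraNneq R0 => <-; rewrite mem_nth.
exists (nth 1 P), (nth 1 Q); split=> [i|]; last split=> [j|s sS].
- by rewrite nth_neq0 // sP.
- by rewrite nth_neq0 // sQ.
- by rewrite fE // /spsum (big_nth 1) (big_nth 1 (r := Q)) sP sQ !big_mkord.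
Qed.

Lemma is_spsum_eq_in S m n f g :
  is_spsum S m n f -> {in S, f =1 g} -> is_spsum S m n g.
Proof.
move=> [P [Q [sP sQ PQ0 fE]]] fg.
by exists P, Q; split=> // s sS; rewrite -fg ?fE.
Qed.

Lemma is_spsum0 S : is_spsum S 0 0 (fun=> 0).
Proof. by exists [::], [::]; split=> // s _; rewrite /spsum !big_nil subr0. Qed.

Lemma is_spsum1 S : is_spsum S 1 0 (fun=> 1).
Proof.
exists [:: 1], [::]; split=> //; first by rewrite inE eq_sym oner_eq0.
by move=> s _; rewrite /spsum big_seq1 big_nil exp1rz subr0.
Qed.

Lemma is_spsumD S m1 n1 m2 n2 f g :
  is_spsum S m1 n1 f -> is_spsum S m2 n2 g ->
  is_spsum S (m1 + m2) (n1 + n2) (fun s => f s + g s).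
Proof.
move=> [P1 [Q1 [sP1 sQ1 PQ1 fE]]] [P2 [Q2 [sP2 sQ2 PQ2 gE]]].
exists (P1 ++ P2), (Q1 ++ Q2); split; rewrite ?size_cat ?sP1 ?sP2 ?sQ1 ?sQ2 //.
  by move: PQ1 PQ2; rewrite !mem_cat !negb_or => /andP[-> ->] /andP[-> ->].
move=> s sS; rewrite fE // gE // /spsum !big_cat /=.
by rewrite addrACA opprD.
Qed.

Lemma is_spsumN S m n f : is_spsum S m n f -> is_spsum S n m (fun s => - f s).
Proof.
move=> [P [Q [sP sQ PQ0 fE]]]; exists Q, P; split=> //.
  by move: PQ0; rewrite !mem_cat orbC.
by move=> s sS; rewrite fE // opprB.
Qed.

Lemma is_spsum_pad S m n f : is_spsum S m n f -> is_spsum S m.+1 n.+1 f.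
Proof.
move=> [P [Q [sP sQ PQ0 fE]]]; exists (1 :: P), (1 :: Q); split=> /=.
- by rewrite sP.
- by rewrite sQ.
- by move: PQ0; rewrite !(mem_cat, inE) eq_sym oner_eq0.
by move=> s sS; rewrite fE // /spsum !big_cons opprD addrACA subrr add0r.
Qed.

Lemma is_spsum_scale S m n f t :
  t != 0 -> is_spsum S m n f -> is_spsum S m n (fun s => t ^ s * f s).
Proof.
move=> t0 [P [Q [sP sQ PQ0 fE]]].
exists [seq x * t | x <- P], [seq x * t | x <- Q]; split; rewrite ?size_map //.
  rewrite -map_cat; apply/mapP => -[x xPQ /esym/eqP].
  by rewrite mulf_eq0 (negPf t0) orbF => /eqP x0; rewrite -x0 xPQ in PQ0.
move=> s sS; rewrite fE // /spsum !big_map mulrBr !mulr_sumr.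
by congr (_ - _); apply: eq_bigr => x _; rewrite expfzMl mulrC.
Qed.

Lemma is_spsumMn S m n f k :
  is_spsum S m n f -> is_spsum S (k * m) (k * n) (fun s => f s *+ k).
Proof.
move=> fS; elim: k => [|k IHk]; first exact: is_spsum0.
rewrite !mulSn; apply: (is_spsum_eq_in (is_spsumD fS IHk)) => s _.
by rewrite mulrS.
Qed.

Lemma is_spsum_sum S m n (l : seq K) (F : K -> int -> K) :
  {in l, forall b, is_spsum S m n (F b)} ->
  is_spsum S (size l * m) (size l * n) (fun s => \sum_(b <- l) F b s).
Proof.
elim: l => [|b l IHl] Fl.
  by apply: (is_spsum_eq_in (is_spsum0 S)) => s _; rewrite big_nil.
have Fl' : {in l, forall c, is_spsum S m n (F c)}.
  by move=> c cl; apply: Fl; rewrite inE cl orbT.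
have := is_spsumD (Fl b (mem_head b l)) (IHl Fl').
by move/is_spsum_eq_in; apply => s _; rewrite big_cons.
Qed.

Lemma is_spsumM_exprzBn S m n f (a : K) k : a != 0 -> is_spsum S m n f ->
  is_spsum S (m + k * n) (n + k * m) (fun s => (a ^ s - k%:R) * f s).
Proof.
move=> a0 fS.
have := is_spsumD (is_spsum_scale a0 fS) (is_spsumMn k (is_spsumN fS)).
by move/is_spsum_eq_in; apply => s _; rewrite mulrBl mulr_natl mulNrn.
Qed.

Lemma spsum_affine P Q (t : K) (n : nat) :
  spsum [seq b * t + 1 | b <- P] [seq b * t + 1 | b <- Q] n
  = \sum_(i < n.+1) spsum P Q i * t ^+ i *+ 'C(n, i).
Proof.
have sum_affine R : \sum_(x <- [seq b * t + 1 | b <- R]) x ^ n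
    = \sum_(i < n.+1) (\sum_(b <- R) b ^ i) * t ^+ i *+ 'C(n, i).
  rewrite big_map; under eq_bigr do rewrite -exprnP exprD1n.
  rewrite exchange_big /=; apply: eq_bigr => i _.
  by rewrite mulr_suml -sumrMnl; apply: eq_bigr => b _; rewrite exprMn.
rewrite /spsum !sum_affine -sumrB.
by apply: eq_bigr => i _; rewrite -mulrnBl -mulrBl.
Qed.

Lemma affine_neq0 (b t : K) : b != 0 -> t != - b^-1 -> b * t + 1 != 0.
Proof.
move=> b0; apply: contra; rewrite addr_eq0 => /eqP bt.
by rewrite -(mulKf b0 t) bt mulrN1.
Qed.

End SignedPowerSums.

Section CharZero.

Context {K : fieldType}.
Hypothesis K_char0 : [pchar K] =i pred0.
Implicit Types (S : seq int) (f : int -> K).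

Lemma pchar0_natr_inj : injective (fun n : nat => n%:R : K).
Proof.
move=> m n /= eq_mn; wlog le_mn : m n eq_mn / (m <= n)%N.
  move=> le_inj; case/orP: (leq_total m n); first exact: le_inj.
  by move/(le_inj _ _ (esym eq_mn)).
apply/eqP; rewrite eqn_leq le_mn -subn_eq0 -((pcharf0P K).1 K_char0).
by rewrite natrB // eq_mn subrr eqxx.
Qed.

Lemma expr2z_eq1 (z : int) : ((2 : K) ^ z == 1) = (z == 0).
Proof.
have expr2n_eq1 n : ((2 : K) ^+ n == 1) = (n == 0)%N.
  rewrite -natrX -[1 : K]/(1%:R) (inj_eq pchar0_natr_inj).
  by rewrite -[1%N](expn0 2) eqn_exp2l.
by case: z => n; rewrite /exprz ?invr_eq1 expr2n_eq1.
Qed.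

Lemma expr2z_inj : injective (fun z : int => (2 : K) ^ z).
Proof.
have two0 : (2 : K) != 0 by rewrite ((pcharf0P K).1 K_char0).
move=> x y /= eq_xy; apply/eqP; rewrite -subr_eq0 -expr2z_eq1.
by rewrite expfzDr // -invr_expz eq_xy mulfV // expfz_neq0.
Qed.

(* The subtracted constant is a natural number so that multiplying by it
   only duplicates bases. *)
Definition root_base (r : int) : K := if (0 <= r)%R then 2 else 2^-1.
Definition root_factor (r s : int) : K := root_base r ^ s - (2 ^ `|r|)%N%:R.

Lemma root_base_neq0 r : root_base r != 0.
Proof.
have two0 : (2 : K) != 0 by rewrite ((pcharf0P K).1 K_char0).
by rewrite /root_base; case: ifP; rewrite ?invr_eq0.
Qed.

Lemma root_factor_eq0 r s : (root_factor r s == 0) = (s == r).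
Proof.
rewrite /root_factor subr_eq0.
have -> : root_base r ^ s = 2 ^ (if (0 <= r)%R then s else - s).
  by rewrite /root_base; case: ifP => // _; rewrite exprz_inv.
have -> : (2 ^ `|r|)%N%:R = (2 : K) ^ (if (0 <= r)%R then r else - r).
  by rewrite natrX; case: r.
by rewrite (inj_eq expr2z_inj); case: ifP => // _; rewrite eqr_opp.
Qed.

Lemma is_spsum_prod_root_factor S (L : seq int) :
  exists m n, is_spsum S m n (fun s => \prod_(r <- L) root_factor r s).
Proof.
elim: L => [|r L [m [n IHL]]].
  exists 1%N, 0%N.
  by apply: (is_spsum_eq_in (is_spsum1 S)) => s _; rewrite big_nil.
have := is_spsumM_exprzBn (2 ^ `|r|) (root_base_neq0 r) IHL.
move/is_spsum_eq_in=> prodS; do 2 eexists.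
by apply: prodS => s _; rewrite big_cons.
Qed.

Lemma is_spsum_delta_scaled S s0 : exists2 c : K, c != 0 &
  exists m n, is_spsum S m n (fun s => if s == s0 then c else 0).
Proof.
set L := [seq r <- S | r != s0].
have [m [n prodL]] := is_spsum_prod_root_factor S L.
exists (\prod_(r <- L) root_factor r s0).
  rewrite prodf_seq_neq0; apply/allP => r.
  by rewrite mem_filter root_factor_eq0 eq_sym => /andP[].
exists m, n; apply: (is_spsum_eq_in prodL) => s sS.
case: eqP => [-> // | /eqP s_neq0].
have /eqP root_s : root_factor s s == 0 by rewrite root_factor_eq0.
by rewrite (big_rem s) ?mem_filter ?s_neq0 //= root_s mul0r.
Qed.

Lemma pchar0_exists_notin (B : seq K) : exists t, t \notin B.
Proof.
pose L := [seq i%:R : K | i <- iota 0 (size B).+1].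
have uL : uniq L by rewrite map_inj_uniq ?iota_uniq //; exact: pchar0_natr_inj.
case: (boolP (all (mem B) L)) => [/allP LB | /allPn[t _ tB]]; last by exists t.
by have := uniq_leq_size uL LB; rewrite size_map size_iota ltnn.
Qed.

Lemma is_spsum_delta_linear S s0 : s0 != 0 ->
  exists m n (kappa : K) (B : seq K), kappa != 0 /\
    forall t, t \notin B ->
      is_spsum S m n (fun s => if s == s0 then kappa * t else 0).
Proof.
move=> s0_neq0; set e := `|s0|%N; have e_gt0 : (0 < e)%N by rewrite absz_gt0.
have [c c0 [m [n deltaS]]] := is_spsum_delta_scaled S s0.
have [k k0 [_ [_ [p [q [_ _ pq0 pqE]]]]]] :=
  is_spsum_delta_scaled [seq i%:Z | i <- iota 0 e.+1] 1.
have spsum_pq (i : 'I_e.+1) : spsum p q i = if i == 1%N :> nat then k else 0.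
  by rewrite -pqE // map_f // mem_iota add0n ltn_ord.
have lin t : spsum [seq b * t + 1 | b <- p] [seq b * t + 1 | b <- q] e
             = k *+ e * t.
  rewrite spsum_affine (bigD1 (Ordinal (e_gt0 : 1 < e.+1)%N)) // spsum_pq /=.
  rewrite big1 => [|i]; last first.
    rewrite -val_eqE /= => /negPf i_neq1.
    by rewrite spsum_pq i_neq1 mul0r mul0rn.
  by rewrite addr0 bin1 expr1 mulrnAl.
exists (size p * m + size q * n)%N, (size p * n + size q * m)%N, (c * k *+ e).
exists [seq - b^-1 | b <- p ++ q]; split=> [|t tB].
  by rewrite -mulr_natr !mulf_neq0 // ((pcharf0P K).1 K_char0) -lt0n.
have twist (R : seq K) m' n' f : {subset R <= p ++ q} -> is_spsum S m' n' f ->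
    is_spsum S (size R * m') (size R * n')
      (fun s => \sum_(x <- [seq b * t + 1 | b <- R]) (x ^ sgz s0) ^ s * f s).
  move=> Rpq fS; rewrite -(size_map (fun b => b * t + 1) R).
  apply: is_spsum_sum => _ /mapP[b bR ->]; apply: is_spsum_scale fS.
  have bpq := Rpq b bR; rewrite expfz_neq0 // affine_neq0 //.
    by apply: contraNneq pq0 => <-.
  by apply: contraNneq tB => ->; apply: map_f.
have twist_p := twist p _ _ _ (mem_subseq (prefix_subseq p q)) deltaS.
have twist_q :=
  twist q _ _ _ (mem_subseq (suffix_subseq p q)) (is_spsumN deltaS).
have := is_spsumD twist_p twist_q.
move/is_spsum_eq_in; apply=> s _; case: eqP => [->|_]; last first.
  by rewrite oppr0 !big1 ?addr0 // => x _; rewrite mulr0.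
under eq_bigr do rewrite exprz_exp -abszEsg.
under [X in _ + X]eq_bigr do rewrite exprz_exp -abszEsg.
by rewrite -!mulr_suml mulrN -mulrBl mulrC -mulrnAr -mulrA -lin.
Qed.

Lemma is_spsum_delta S s0 : s0 != 0 ->
  exists M, forall v : K, is_spsum S M M (fun s => if s == s0 then v else 0).
Proof.
move=> s0_neq0.
have [m [n [kappa [B [kappa0 linS]]]]] := is_spsum_delta_linear S s0_neq0.
exists (m + n)%N => v; set d := v / kappa.
have [t] := pchar0_exists_notin (B ++ [seq b + d | b <- B]).
rewrite mem_cat negb_or => /andP[tB tdB].
have tdB' : t - d \notin B.
  by apply: contra tdB => tdB; apply/mapP; exists (t - d); rewrite ?subrK.
have := is_spsumD (linS t tB) (is_spsumN (linS _ tdB')).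
rewrite [(n + m)%N]addnC; move/is_spsum_eq_in; apply=> s _.
case: eqP => _; last by rewrite oppr0 addr0.
by rewrite -mulrBr opprB addrC subrK mulrC divfK.
Qed.

Lemma is_spsum_indicator S (U : seq int) : {in U, forall u, u != 0} ->
  exists M, forall f, is_spsum S M M (fun s => if s \in U then f s else 0).
Proof.
elim: U => [|u U IHU] U0.
  by exists 0%N => f; apply: (is_spsum_eq_in (is_spsum0 S)).
have [M1 delta_u] := is_spsum_delta S (U0 u (mem_head u U)).
have [M2 indU] := IHU (fun w wU => U0 w (mem_behead (s := u :: U) wU)).
exists (M1 + M2)%N => f.
have := is_spsumD (delta_u (f u)) (indU (fun s => if s == u then 0 else f s)).
move/is_spsum_eq_in; apply=> s _; rewrite inE.
by case: eqP => [->|_]; rewrite ?eqxx; case: (_ \in U); rewrite ?add0r ?addr0.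
Qed.

End CharZero.

Theorem theorem3p2 (K : fieldType) (S : seq int)
  (hchar : [pchar K] =i pred0)
  (hS : forall s, s \in S -> s != 0) :
  exists N : nat, (0 < N)%N /\ (forall f : int -> K, inXS S N f).
Proof.
have [M indS] := is_spsum_indicator hchar S hS.
exists M.+1; split=> // f; apply: is_spsum_inXS; apply: is_spsum_pad.
by apply: (is_spsum_eq_in (indS f)) => s ->.
Qed.
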